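(* Let $\Gamma=(C_0,L_{\alpha_1},\dots,L_{\alpha_n},C_n)$ be a gallery in $\Phi$ and $0=i_0\le i_1\le\dots\le i_k=n$ integers. For $l=0,\dots,k-1$ let $\Psi_l$ be a saturated root subsystem of $\Phi$ and $\Delta_l$ a gallery in $\Phi$ lifting $(\Gamma_{[i_l,i_{l+1}]})_{\Psi_l}$, such that for each $l<k-1$ the final chamber of $\Delta_l$ equals the initial chamber of $\Delta_{l+1}$ (this holds in particular for the construction where, given $\Delta_l$ with final chamber $D$, one picks a nonempty $X\subset\Phi^s(D)\cap\Phi^+(C_{i_{l+1}})$, sets $\Psi_{l+1}=\mathbb R X\cap\Phi$ and lets $\Delta_{l+1}$ be the lifting of $(\Gamma_{[i_{l+1},i_{l+2}]})_{\Psi_{l+1}}$ with initial chamber $D$, and symmetrically to the left). Let $p_l:[1,|\Delta_l|]\to[1,i_{l+1}-i_l]$ be the increasing embedding with image $I_{\Psi_l}(\Gamma_{[i_l,i_{l+1}]})$, and define $p:[1,|\Delta_0|+\dots+|\Delta_{k-1}|]\to[1,n]$ by $p(j)=p_l(j-|\Delta_0|-\dots-|\Delta_{l-1}|)+i_l$ for $|\Delta_0|+\dots+|\Delta_{l-1}|<j\le|\Delta_0|+\dots+|\Delta_l|$. Then $(\Delta_0\cup\Delta_1\cup\dots\cup\Delta_{k-1},\Gamma)$ is a $p$-pair with positive sign and positive cosign.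
   Context: $E$ is a finite-dimensional real Euclidean space with inner product $(\cdot,\cdot)$; $\Phi\subset E$ is a finite (reduced) root system (not necessarily spanning, not necessarily crystallographic) with reflections $\omega_\alpha$ through $L_\alpha=\alpha^\perp$. A root subsystem is a nonempty $\Psi\subset\Phi$ stable under $\omega_\alpha$, $\alpha\in\Psi$; it is saturated if $\Psi=\mathbb R\Psi\cap\Phi$. $\mathrm{Ch}_X$ ($X\subset\Phi$) is the set of connected components of $E\setminus\bigcup_{\alpha\in X}L_\alpha$; $C_\Psi$ is the chamber of $\mathrm{Ch}_\Psi$ containing $C\in\mathrm{Ch}_\Phi$. Chambers are connected through $L_\alpha$ if the intersection of their closures with $L_\alpha$ has nonempty interior in $L_\alpha$. A gallery in $X$ is $(C_0,L_{\alpha_1},C_1,\dots,L_{\alpha_n},C_n)$ with $C_j\in\mathrm{Ch}_X$, $\alpha_j\in X$, $C_{j-1},C_j$ connected through $L_{\alpha_j}$; length $n$, initial chamber $C_0$, final chamber $C_n$. $\Gamma_{[i,j]}=(C_i,L_{\alpha_{i+1}},\dots,L_{\alpha_j},C_j)$. If the final chamber of $\Gamma$ equals the initial chamber of $\Delta=(C_n,L_{\beta_1},\dots,L_{\beta_m},D_m)$, then $\Gamma\cup\Delta=(C_0,L_{\alpha_1},\dots,L_{\alpha_n},C_n,L_{\beta_1},\dots,L_{\beta_m},D_m)$. $I_\Psi(\Gamma)=\{i:\alpha_i\in\Psi\}=\{i_1<\dots<i_m\}$ and $\Gamma_\Psi=((C_0)_\Psi,L_{\alpha_{i_1}},(C_{i_1})_\Psi,\dots,L_{\alpha_{i_m}},(C_{i_m})_\Psi)$.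 $\Phi^+(C)=\{\alpha\in\Phi:(e,\alpha)>0\ \forall e\in C\}$, $\Phi^s(C)$ the simple system in $\Phi^+(C)$; similarly for $\Psi$. $C$ lifts $D\in\mathrm{Ch}_\Psi$ if $\Psi^s(D)\subset\Phi^s(C)$; a gallery in $\Phi$ lifts a gallery in $\Psi$ if the wall sequences coincide and each $j$th chamber of the first lifts the $j$th chamber of the second. For galleries $\Gamma=(C_0,L_{\alpha_1},\dots,C_n)$, $\Delta=(D_0,L_{\beta_1},\dots,D_m)$ in $\Phi$ and increasing $p:[1,m]\to[1,n]$, $(\Delta,\Gamma)$ is a $p$-pair if $L_{\alpha_{p(i)}}=L_{\beta_i}$ for all $i$; its sign has $\epsilon_i=1$ iff $L_{\beta_i}$ does not separate $D_i$ and $C_{p(i)}$, its cosign has $\mu_i=1$ iff $L_{\beta_i}$ does not separate $D_{i-1}$ and $C_{p(i)-1}$ (otherwise $-1$); positive means all entries are $1$. *)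

From HB Require Import structures.
From mathcomp Require Import all_boot all_order all_algebra.
From mathcomp Require Import all_classical all_reals all_analysis.
Set Implicit Arguments. Unset Strict Implicit. Unset Printing Implicit Defensive.
Import Order.TTheory GRing.Theory Num.Theory.
Import numFieldNormedType.Exports.
Local Open Scope classical_set_scope.
Local Open Scope ring_scope.

Section RootGalleries.
Variables (R : realType) (d : nat).

Local Notation E := 'rV[R]_d.

Definition dot (u v : E) : R := \sum_(i < d) u ord0 i * v ord0 i.

Definition hyp (a : E) : set E := [set x | dot x a = 0].

Definition refl (a x : E) : E := x - ((2 * dot x a) / dot a a) *: a.

Definition root_system (Phi : seq E) : Prop :=
  [/\ uniq Phi, (0 : E) \notin Phi,
      (forall a b, a \in Phi -> b \in Phi -> refl a b \in Phi) &
      (forall a b, a \in Phi -> b \in Phi ->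
         (exists c : R, b = c *: a) -> b = a \/ b = - a)].

Definition root_subsystem (Phi Psi : seq E) : Prop :=
  [/\ Psi != [::], {subset Psi <= Phi} &
      (forall a b, a \in Psi -> b \in Psi -> refl a b \in Psi)].

Definition in_span (X : seq E) (v : E) : Prop :=
  exists c : E -> R, v = \sum_(b <- X) c b *: b.

Definition saturated (Phi Psi : seq E) : Prop :=
  forall b, b \in Phi -> in_span Psi b -> b \in Psi.

Definition regular (X : seq E) : set E :=
  [set x | forall a, a \in X -> dot x a != 0].

Definition chamber (X : seq E) (C : set E) : Prop :=
  exists2 x, regular X x & C = connected_component (regular X) x.

Definition chamber_of (X : seq E) (C : set E) : set E :=
  \bigcup_(D in [set D | chamber X D /\ C `<=` D]) D.

(* C and C' are connected through L_alpha: the intersection of their closures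
   with L_alpha has nonempty interior in L_alpha (relative topology). *)
Definition connected_through (C C' : set E) (a : E) : Prop :=
  exists2 x, hyp a x &
    \forall y \near x, hyp a y -> (closure C `&` closure C' `&` hyp a) y.

(* Galleries (C_0, L_{alpha_1}, C_1, ..., L_{alpha_n}, C_n): length n,
   chambers gch 0 .. gch n, roots grt 1 .. grt n (values outside are junk). *)
Record gallery := Gallery { glen : nat; gch : nat -> set E; grt : nat -> E }.

Definition gallery_in (X : seq E) (G : gallery) : Prop :=
  (forall j, (j <= glen G)%N -> chamber X (gch G j)) /\
  (forall j, (1 <= j <= glen G)%N ->
     grt G j \in X /\ connected_through (gch G j.-1) (gch G j) (grt G j)).

Definition subgallery (G : gallery) (i j : nat) : gallery :=
  Gallery (j - i) (fun t => gch G (i + t)) (fun t => grt G (i + t)).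

Definition gunion (G H : gallery) : gallery :=
  Gallery (glen G + glen H)
    (fun t => if (t <= glen G)%N then gch G t else gch H (t - glen G))
    (fun t => if (t <= glen G)%N then grt G t else grt H (t - glen G)).

Fixpoint gunionN (D : nat -> gallery) (k : nat) : gallery :=
  match k with
  | 0 => D 0%N
  | k'.+1 => gunion (gunionN D k') (D k)
  end.

Definition Iidx (Psi : seq E) (G : gallery) : seq nat :=
  [seq i <- iota 1 (glen G) | grt G i \in Psi].

Definition gal_restrict (Psi : seq E) (G : gallery) : gallery :=
  let s := 0%N :: Iidx Psi G in
  Gallery (size (Iidx Psi G))
    (fun j => chamber_of Psi (gch G (nth 0%N s j)))
    (fun j => grt G (nth 0%N s j)).

Definition posroot (X : seq E) (C : set E) (a : E) : Prop :=
  a \in X /\ (forall e, C e -> 0 < dot e a).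

(* the simple system of a positive system P: its indecomposable elements,
   i.e. those not a nonnegative linear combination of the other elements *)
Definition simple_root (P : E -> Prop) (a : E) : Prop :=
  P a /\ ~ (exists (s : seq E) (c : E -> R),
              [/\ (forall b, b \in s -> P b /\ b != a),
                  (forall b, 0 <= c b) & a = \sum_(b <- s) c b *: b]).

Definition lifts_ch (Phi Psi : seq E) (C D : set E) : Prop :=
  forall a, simple_root (posroot Psi D) a -> simple_root (posroot Phi C) a.

Definition lifts (Phi Psi : seq E) (Delta G : gallery) : Prop :=
  [/\ glen Delta = glen G,
      (forall j, (1 <= j <= glen G)%N -> hyp (grt Delta j) = hyp (grt G j)) &
      (forall j, (j <= glen G)%N -> lifts_ch Phi Psi (gch Delta j) (gch G j))].

Definition separates (b : E) (A B : set E) : Prop :=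
  ((forall x, A x -> 0 < dot x b) /\ (forall y, B y -> dot y b < 0)) \/
  ((forall x, A x -> dot x b < 0) /\ (forall y, B y -> 0 < dot y b)).

Definition ppair (Delta Gamma : gallery) (p : nat -> nat) : Prop :=
  [/\ (forall i, (1 <= i <= glen Delta)%N -> (1 <= p i <= glen Gamma)%N),
      (forall i j, (1 <= i)%N -> (i < j)%N -> (j <= glen Delta)%N -> (p i < p j)%N) &
      (forall i, (1 <= i <= glen Delta)%N ->
         hyp (grt Gamma (p i)) = hyp (grt Delta i))].

Definition positive_sign (Delta Gamma : gallery) (p : nat -> nat) : Prop :=
  forall i, (1 <= i <= glen Delta)%N ->
    ~ separates (grt Delta i) (gch Delta i) (gch Gamma (p i)).

Definition positive_cosign (Delta Gamma : gallery) (p : nat -> nat) : Prop :=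
  forall i, (1 <= i <= glen Delta)%N ->
    ~ separates (grt Delta i) (gch Delta i.-1) (gch Gamma (p i).-1).

End RootGalleries.

From Pilot Require Import Defs.
From HB Require Import structures.
From mathcomp Require Import all_boot all_order all_algebra.
From mathcomp Require Import all_classical all_reals all_analysis.
Import Order.TTheory GRing.Theory Num.Theory.
Import numFieldNormedType.Exports.
Local Open Scope classical_set_scope.
Local Open Scope ring_scope.
Set Implicit Arguments. Unset Strict Implicit. Unset Printing Implicit Defensive.

(* Each wall of the concatenated gallery is, up to sign, a wall [L_alpha] of
   [Gamma] with [alpha] in [Psi_l].  If a chamber [C] of [Gamma] lies on the
   positive side of [L_alpha], so does its [Psi_l]-chamber, hence [alpha] is a
   nonnegative combination of [Psi_l]-simple roots; these are simple, hence
   positive, for any chamber lifting it, so the lifting chamber of [Delta_l]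
   lies on the same side of [L_alpha] as [C]: this is the sign.  For the cosign,
   the chamber of [Gamma] just before the wall is reached from the chamber lifted
   by the previous chamber of [Delta_l] crossing only walls outside [Psi_l],
   none of which is [L_alpha]. *)

Section Halfspaces.
Variables (R : realType) (d : nat).
Local Notation E := 'rV[R]_d.
Local Notation dot := (@dot R d).

Lemma dotC (x a : E) : dot x a = dot a x.
Proof. by apply: eq_bigr => i _; rewrite mulrC. Qed.

Lemma dotDl (x y a : E) : dot (x + y) a = dot x a + dot y a.
Proof. by rewrite /Defs.dot -big_split; apply: eq_bigr => i _; rewrite mxE mulrDl. Qed.

Lemma dotZl (c : R) (x a : E) : dot (c *: x) a = c * dot x a.
Proof. by rewrite /Defs.dot mulr_sumr; apply: eq_bigr => i _; rewrite mxE mulrA. Qed.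

Lemma dotNl (x a : E) : dot (- x) a = - dot x a.
Proof. by rewrite -scaleN1r dotZl mulN1r. Qed.

Lemma dotBl (x y a : E) : dot (x - y) a = dot x a - dot y a.
Proof. by rewrite dotDl dotNl. Qed.

Lemma dotDr (x y a : E) : dot a (x + y) = dot a x + dot a y.
Proof. by rewrite dotC dotDl !(dotC a). Qed.

Lemma dotZr (c : R) (x a : E) : dot a (c *: x) = c * dot a x.
Proof. by rewrite dotC dotZl dotC. Qed.

Lemma dotNr (x a : E) : dot a (- x) = - dot a x.
Proof. by rewrite dotC dotNl dotC. Qed.

Lemma dotBr (x y a : E) : dot a (x - y) = dot a x - dot a y.
Proof. by rewrite dotDr dotNr. Qed.

Lemma dot_sumr (T : Type) (s : seq T) (F : T -> E) (a : E) :
  dot a (\sum_(t <- s) F t) = \sum_(t <- s) dot a (F t).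
Proof.
elim: s => [|t s IH]; last by rewrite !big_cons dotDr IH.
by rewrite !big_nil /Defs.dot big1 // => i _; rewrite mxE mulr0.
Qed.

Lemma dotxx_eq0 (x : E) : (dot x x == 0) = (x == 0).
Proof.
apply/idP/eqP => [|->]; last by rewrite /Defs.dot big1 // => i _; rewrite mxE mul0r.
rewrite psumr_eq0 => [/allP x0|i _]; last by rewrite -expr2 sqr_ge0.
apply/rowP => i; rewrite mxE.
by move/implyP: (x0 i (mem_index_enum i)) => /(_ isT); rewrite mulf_eq0 orbb => /eqP.
Qed.

Lemma orthogonal_sub_colinear (a b : E) : a != 0 ->
  (forall v, dot v a = 0 -> dot v b = 0) -> b = (dot b a / dot a a) *: a.
Proof.
move=> a0 ab; have aa0 : dot a a != 0 by rewrite dotxx_eq0.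
set c := dot b a / dot a a.
have ortha : dot (b - c *: a) a = 0 by rewrite dotBl dotZl /c divfK // subrr.
have orthb := ab _ ortha.
apply/eqP; rewrite -subr_eq0 -dotxx_eq0.
by rewrite dotBr dotZr orthb ortha mulr0 subrr.
Qed.

Lemma exists_orthogonal_not_orthogonal (a b : E) : a != 0 ->
  (forall c : R, b != c *: a) -> exists v, dot v a = 0 /\ dot v b != 0.
Proof.
move=> a0 nab; apply: contrapT => nv.
have /(orthogonal_sub_colinear a0) ba : forall v, dot v a = 0 -> dot v b = 0.
  move=> v va; apply: contrapT => vb; apply: nv; exists v; split => //; exact/eqP.
by move: (nab (dot b a / dot a a)); rewrite -ba eqxx.
Qed.

Lemma continuous_dot (a : E) : continuous (fun x : E => dot x a).
Proof.
apply: (@continuous_big _ _ +%R 0 xpredT add_continuous) => i _ x.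
apply: (@continuousM _ _ (fun M : E => M ord0 i) (fun _ => a ord0 i)).
  exact: coord_continuous.
exact: cst_continuous.
Qed.

Lemma open_dot_gt0 (a : E) : open [set y : E | 0 < dot y a].
Proof.
apply: (@open_comp _ _ (fun y => dot y a) [set r : R | 0 < r]); last exact: open_gt.
by move=> x _; apply: continuous_dot.
Qed.

Lemma closed_dot_ge0 (a : E) : closed [set y : E | 0 <= dot y a].
Proof.
apply: (@preimage_closed _ _ (fun y => dot y a) [set r : R | 0 <= r]); last exact: closed_ge.
by move=> x _; apply: continuous_dot.
Qed.

Lemma closure_dot_ge0 (C : set E) (a : E) : (forall y, C y -> 0 <= dot y a) ->
  forall y, closure C y -> 0 <= dot y a.
Proof.
move=> Cge0 y /(closureS Cge0).
by rewrite -(proj1 (closure_id _) (@closed_dot_ge0 a)).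
Qed.

Definition pos_on (a : E) (C : set E) : Prop := forall y, C y -> 0 < dot y a.

Lemma pos_onN_contra (a : E) (C : set E) : (exists y, C y) ->
  pos_on a C -> ~ pos_on (- a) C.
Proof.
move=> [y Cy] /(_ y Cy) + /(_ y Cy); rewrite dotNr oppr_gt0 => ya0 ya0'.
by move: (lt_trans ya0' ya0); rewrite ltxx.
Qed.

Lemma separatesE (b : E) (A B : set E) :
  separates b A B <-> (pos_on b A /\ pos_on (- b) B) \/ (pos_on (- b) A /\ pos_on b B).
Proof.
have pos_onNE (C : set E) : pos_on (- b) C <-> forall y, C y -> dot y b < 0.
  by split=> H y /H; rewrite dotNr oppr_gt0.
by rewrite /separates !pos_onNE.
Qed.

Lemma separatesN (b : E) (A B : set E) : separates (- b) A B <-> separates b A B.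
Proof. by rewrite !separatesE opprK; split=> -[]; tauto. Qed.

Lemma connected_pos_on (A : set E) (a z : E) : connected A ->
  (forall y, A y -> dot y a != 0) -> A z -> 0 < dot z a -> pos_on a A.
Proof.
move=> cA nz Az za y Ay.
have : A `&` [set y | 0 < dot y a] = A.
  apply: cA; first by exists z.
    by exists [set y | 0 < dot y a] => //; apply: open_dot_gt0.
  exists [set y | 0 <= dot y a]; first exact: closed_dot_ge0.
  apply/seteqP; split=> x [Ax xa] //=; split=> //; first exact: ltW.
  by rewrite lt_neqAle eq_sym nz.
by move=> AE; move: Ay; rewrite -AE => -[].
Qed.

End Halfspaces.

Section Chambers.
Variables (R : realType) (d : nat).
Local Notation E := 'rV[R]_d.
Local Notation dot := (@dot R d).
Local Notation pos_on := (@pos_on R d).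

Lemma chamber_inhabited (X : seq E) (C : set E) : chamber X C -> exists y, C y.
Proof. by case=> x rx ->; exists x; apply: connected_component_refl. Qed.

Lemma chamber_sign (X : seq E) (C : set E) (a : E) : chamber X C -> a \in X ->
  pos_on a C \/ pos_on (- a) C.
Proof.
case=> x rx -> aX.
have Cx := connected_component_refl rx.
have cC := @component_connected _ (regular X) x.
have avoid b : (forall y, regular X y -> dot y b != 0) ->
    forall y, connected_component (regular X) x y -> dot y b != 0.
  by move=> rb y /connected_component_sub; apply: rb.
have [xa|xa|xa] := ltgtP (dot x a) 0; last by move: (rx a aX); rewrite xa eqxx.
- right; apply: (connected_pos_on cC _ Cx).
    by apply: avoid => y /(_ a aX); rewrite dotNr oppr_eq0.
  by rewrite dotNr oppr_gt0.
- left; apply: (connected_pos_on cC _ Cx xa).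
  by apply: avoid => y /(_ a aX).
Qed.

Lemma same_side_pos_on (X : seq E) (C C' : set E) (a : E) :
  chamber X C' -> a \in X -> ~ separates a C C' -> pos_on a C -> pos_on a C'.
Proof.
move=> ch' aX nsep Ca; case: (chamber_sign ch' aX) => // C'a.
by case: nsep; rewrite separatesE; left.
Qed.

Lemma sub_chamber_of (Phi Psi : seq E) (C : set E) :
  chamber Phi C -> {subset Psi <= Phi} -> C `<=` chamber_of Psi C.
Proof.
move=> [x rx ->] sPsi y Cy.
have rPsi : regular Phi `<=` regular Psi by move=> w rw a /sPsi; apply: rw.
have CD : connected_component (regular Phi) x `<=` connected_component (regular Psi) x.
  apply: connected_component_max; first exact: connected_component_refl.
    by move=> w /connected_component_sub /rPsi.
  exact: component_connected.
exists (connected_component (regular Psi) x); last exact: CD.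
by split=> //; exists x; first exact: rPsi.
Qed.

Lemma pos_on_chamber_of (X : seq E) (C : set E) (a : E) : (exists z, C z) ->
  a \in X -> pos_on a C -> pos_on a (chamber_of X C).
Proof.
move=> [z Cz] aX Ca y [D [[x rx ->] CD] Dy].
apply: (connected_pos_on _ _ (CD _ Cz)) => //; first exact: component_connected.
- by move=> w /connected_component_sub /(_ a aX).
- exact: Ca.
Qed.

(* Moving off [x] inside the wall [hyp a] in a direction [v] transverse to [hyp b]
   gives a common point of the two closures off [hyp b]. *)
Lemma connected_through_point (C C' : set E) (a b : E) : connected_through C C' a ->
  (exists v, dot v a = 0 /\ dot v b != 0) ->
  exists y, [/\ closure C y, closure C' y & dot y b != 0].
Proof.
move=> [x ax nx] [v [va vb]].
have [xb|xb] := eqVneq (dot x b) 0; last first.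
  by have [[Cx C'x] _] := topology_structure.nbhs_singleton nx ax; exists x.
have xv : (fun e : R => x + e *: v) @ (nbhs (0:R)) --> x.
  rewrite -[X in _ --> X]addr0 -(scale0r v).
  by apply: cvgD; [exact: cvg_cst|apply: cvgZr_tmp; exact: cvg_id].
have /nbhs_ballP [e e0 be] := xv _ nx.
have he : ball (0:R) e (e / 2).
  rewrite -ball_normE /= sub0r normrN gtr0_norm ?divr_gt0 //.
  by rewrite ltr_pdivrMr // ltr_pMr // ltr1n.
have ay : hyp a (x + (e / 2) *: v) by rewrite /hyp /= dotDl dotZl va mulr0 addr0.
have [[Cy C'y] _] := be _ he ay.
exists (x + (e / 2) *: v); split => //.
by rewrite dotDl dotZl xb add0r mulf_neq0 // gt_eqF // divr_gt0.
Qed.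

Lemma pos_on_connected_through (Phi : seq E) (C C' : set E) (a b : E) :
  chamber Phi C' -> b \in Phi -> connected_through C C' a -> a != 0 ->
  (forall c : R, b != c *: a) -> pos_on b C -> pos_on b C'.
Proof.
move=> ch' bPhi ct a0 nab Cb.
have [y [Cy C'y yb]] := connected_through_point ct (exists_orthogonal_not_orthogonal a0 nab).
case: (chamber_sign ch' bPhi) => // C'b.
have y0 := closure_dot_ge0 (fun y Cy => ltW (Cb y Cy)) Cy.
have := closure_dot_ge0 (fun y Cy => ltW (C'b y Cy)) C'y.
by rewrite dotNr oppr_ge0 => y0'; move: yb; rewrite eq_le y0 y0'.
Qed.

End Chambers.

Section NonnegativeCombinations.
Variables (R : realType) (d : nat).
Local Notation E := 'rV[R]_d.
Local Notation dot := (@dot R d).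

Definition lincomb (l : seq (R * E)) : E := \sum_(x <- l) x.1 *: x.2.

Definition scale_coefs (c : R) (l : seq (R * E)) : seq (R * E) :=
  [seq (c * x.1, x.2) | x <- l].

Definition nonneg_comb (Q : E -> Prop) (v : E) : Prop :=
  exists l, (forall x, x \in l -> Q x.2 /\ 0 <= x.1) /\ v = lincomb l.

(* [simple_root] for a finite set, with the coefficients carried by the list
   entries so that combinations can be concatenated and rescaled. *)
Definition indecomposable (S : seq E) (b : E) : Prop :=
  b \in S /\ ~ nonneg_comb (fun v => v \in S /\ v != b) b.

Definition reduced (S : seq E) : Prop := forall a b, a \in S -> b \in S ->
  forall c : R, b = c *: a -> b = a \/ b = - a.

Lemma lincomb_cons x l : lincomb (x :: l) = x.1 *: x.2 + lincomb l.
Proof. by rewrite /lincomb big_cons. Qed.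

Lemma lincomb_cat l1 l2 : lincomb (l1 ++ l2) = lincomb l1 + lincomb l2.
Proof. by rewrite /lincomb big_cat. Qed.

Lemma lincomb_scale c l : lincomb (scale_coefs c l) = c *: lincomb l.
Proof.
rewrite /lincomb big_map scaler_sumr.
by apply: eq_bigr => x _ /=; rewrite scalerA.
Qed.

Lemma lincomb_split v l : lincomb l =
  (\sum_(x <- l | x.2 == v) x.1) *: v + lincomb [seq x <- l | x.2 != v].
Proof.
elim: l => [|x l IH]; first by rewrite /lincomb !big_nil scale0r add0r.
rewrite lincomb_cons IH big_cons /=.
by case: eqP => [->|_] /=; [rewrite scalerDl addrA|rewrite lincomb_cons addrCA].
Qed.

Lemma sum_coefs_ge0 (l : seq (R * E)) (P : pred (R * E)) :
  (forall x, x \in l -> 0 <= x.1) -> 0 <= \sum_(x <- l | P x) x.1.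
Proof.
by move=> l0; rewrite big_seq_cond; apply: sumr_ge0 => x /andP [/l0].
Qed.

Section PositiveDirection.
Variable e : E.

Lemma dot_lincomb l : dot e (lincomb l) = \sum_(x <- l) x.1 * dot e x.2.
Proof. by rewrite /lincomb dot_sumr; apply: eq_bigr => x _; rewrite dotZr. Qed.

Variable l : seq (R * E).
Hypothesis lpos : forall x, x \in l -> 0 <= x.1 /\ 0 < dot e x.2.

Lemma lincomb_dot_ge0 : 0 <= dot e (lincomb l).
Proof.
rewrite dot_lincomb big_seq; apply: sumr_ge0 => x /lpos [x1 x2].
by rewrite mulr_ge0 // ltW.
Qed.

Lemma lincomb_dot_eq0 : dot e (lincomb l) = 0 -> forall x, x \in l -> x.1 = 0.
Proof.
move/eqP; rewrite dot_lincomb big_seq psumr_eq0 => [/allP l0 x xl|x /lpos [x1 x2]].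
  have [_ x2] := lpos xl; move/implyP: (l0 x xl) => /(_ xl).
  by rewrite mulf_eq0 (gt_eqF x2) orbF => /eqP.
by rewrite mulr_ge0 // ltW.
Qed.

Lemma lincomb_fixpoint (b : E) (t : R) : 0 < dot e b -> b = t *: b + lincomb l ->
  (t < 1 /\ b = lincomb (scale_coefs (1 - t)^-1 l)) \/ (forall x, x \in l -> x.1 = 0).
Proof.
move=> eb bE.
have ebE : dot e b = t * dot e b + dot e (lincomb l) by rewrite {1}bE dotDr dotZr.
have [t1|t1] := ltP t 1.
  left; split=> //; rewrite lincomb_scale.
  have t10 : 1 - t != 0 by rewrite subr_eq0 gt_eqF.
  apply: (@scalerI _ _ (1 - t)) => //; rewrite scalerA divff // scale1r.
  by rewrite scalerBl scale1r {1}bE addrAC subrr add0r.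
right; apply: lincomb_dot_eq0; apply/eqP; rewrite eq_le lincomb_dot_ge0 andbT.
have : dot e (lincomb l) = (1 - t) * dot e b by rewrite mulrBl mul1r {1}ebE addrAC subrr add0r.
by move->; rewrite pmulr_lle0 // subr_le0.
Qed.

End PositiveDirection.

Lemma nonneg_comb_mono (Q Q' : E -> Prop) v : (forall w, Q w -> Q' w) ->
  nonneg_comb Q v -> nonneg_comb Q' v.
Proof.
move=> QQ' [l [lQ ->]]; exists l; split=> // x /lQ [Qx x0].
by split=> //; apply: QQ'.
Qed.

Lemma nonneg_comb_lincomb (Q : E -> Prop) l :
  (forall x, x \in l -> nonneg_comb Q x.2 /\ 0 <= x.1) -> nonneg_comb Q (lincomb l).
Proof.
elim: l => [|x l IH] lQ; first by exists [::]; split=> //; rewrite /lincomb !big_nil.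
have [[l' [l'Q x2E]] x0] := lQ x (mem_head _ _).
have [l'' [l''Q lE]] : nonneg_comb Q (lincomb l).
  by apply: IH => y yl; apply: lQ; rewrite inE yl orbT.
exists (scale_coefs x.1 l' ++ l''); split.
  by move=> y; rewrite mem_cat => /orP [/mapP [z /l'Q [Qz z0] ->]|/l''Q] //=; rewrite mulr_ge0.
by rewrite lincomb_cat lincomb_scale -x2E -lE lincomb_cons.
Qed.

Lemma reduced_sub (S S' : seq E) : {subset S <= S'} -> reduced S' -> reduced S.
Proof. by move=> sS redS' a b /sS aS /sS; apply: redS'. Qed.

(* Discarding a decomposable element [a0] does not create new indecomposable
   elements: a decomposition of [b] through [a0] can be rerouted through the
   decomposition of [a0], unless [b] is a multiple of [a0]. *)
Lemma indecomposable_filter (e : E) (S : seq E) (a0 b : E) :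
  (forall x, x \in S -> 0 < dot e x) -> reduced S -> a0 \in S ->
  nonneg_comb (fun v => v \in S /\ v != a0) a0 ->
  indecomposable [seq y <- S | y != a0] b -> indecomposable S b.
Proof.
move=> Spos redS a0S [l0 [l0S a0E]] [].
rewrite mem_filter => /andP [ba0 bS] bind; split=> // -[l [lS bE]]; apply: bind.
pose mu := \sum_(x <- l | x.2 == a0) x.1.
pose ka := \sum_(x <- l0 | x.2 == b) x.1.
pose l1 := [seq x <- l | x.2 != a0].
pose l2 := [seq x <- l0 | x.2 != b].
have mu0 : 0 <= mu by apply: sum_coefs_ge0 => x /lS [].
have bE' : b = mu *: a0 + lincomb l1 by rewrite bE [in LHS](lincomb_split a0).
have a0E' : a0 = ka *: b + lincomb l2 by rewrite a0E [in LHS](lincomb_split b).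
pose L := l1 ++ scale_coefs mu l2.
have LS x : x \in L -> ((x.2 \in [seq y <- S | y != a0]) /\ x.2 != b) /\ 0 <= x.1.
  rewrite mem_cat mem_filter => /orP [|/mapP [z]].
    by rewrite mem_filter => /andP [xa0 /lS [[xS xb] x0]]; rewrite xa0 xS.
  rewrite mem_filter => /andP [zb /l0S [[zS za0] z0]] -> /=.
  by rewrite za0 zS zb mulr_ge0.
have bL : b = (mu * ka) *: b + lincomb L.
  by rewrite lincomb_cat lincomb_scale -scalerA addrCA -scalerDr -a0E' addrC -bE'.
have Lpos x : x \in L -> 0 <= x.1 /\ 0 < dot e x.2.
  move=> /LS [[]]; rewrite mem_filter => /andP [_ /Spos ex] _ x0; exact: conj x0 ex.
case: (lincomb_fixpoint Lpos (Spos b bS) bL) => [[t1 bL']|L0].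
  exists (scale_coefs (1 - mu * ka)^-1 L); split=> // x /mapP [z /LS [Sz z0] ->].
  by split=> //; rewrite mulr_ge0 // invr_ge0 subr_ge0 ltW.
have l10 : lincomb l1 = 0.
  by rewrite /lincomb big_seq big1 // => x xl1; rewrite L0 ?scale0r // mem_cat xl1.
have bmu : b = mu *: a0 by rewrite {1}bE' l10 addr0.
case: (redS _ _ a0S bS _ bmu) => ba; first by move: ba0; rewrite ba eqxx.
by move: (Spos _ a0S) (Spos _ bS); rewrite ba dotNr oppr_gt0 => /lt_trans h /h; rewrite ltxx.
Qed.

Lemma nonneg_comb_indecomposable (e : E) n (S : seq E) : (size S <= n)%N ->
  (forall x, x \in S -> 0 < dot e x) -> reduced S ->
  forall a, a \in S -> nonneg_comb (indecomposable S) a.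
Proof.
elim: n S => [|n IH] S sS Spos redS a aS; first by move: aS; case: S sS Spos redS.
have [Sind|] := pselect (forall b, b \in S -> indecomposable S b).
  exists [:: (1, a)]; split; first by move=> x; rewrite inE => /eqP -> /=; split; first exact: Sind.
  by rewrite lincomb_cons /lincomb big_nil addr0 scale1r.
move=> /existsNP [a0 /not_implyP [a0S /not_andP [//|/contrapT a0dec]]].
pose S' := [seq y <- S | y != a0].
have sS' : (size S' <= n)%N.
  rewrite -ltnS (leq_trans _ sS) // size_filter -(count_predC (fun y => y != a0)).
  by rewrite -addn1 leq_add2l -has_count; apply/hasP; exists a0 => //=; rewrite negbK.
have S'S y : y \in S' -> y \in S by rewrite mem_filter => /andP [].
have IH' := IH S' sS' (fun x xS' => Spos x (S'S x xS')) (reduced_sub S'S redS).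
have S'_S v : nonneg_comb (indecomposable S') v -> nonneg_comb (indecomposable S) v.
  by apply: nonneg_comb_mono => w; apply: (indecomposable_filter Spos redS a0S a0dec).
have [->|aa0] := eqVneq a a0; last by apply/S'_S/IH'; rewrite mem_filter aa0.
have [l0 [l0S ->]] := a0dec; apply: nonneg_comb_lincomb => x /l0S [[xS xa0] x0].
by split=> //; apply/S'_S/IH'; rewrite mem_filter xa0.
Qed.

Lemma indecomposable_simple_root (S : seq E) (P : E -> Prop) b :
  (forall v, P v <-> v \in S) -> indecomposable S b -> simple_root P b.
Proof.
move=> PS [bS bind]; split; first exact/PS.
move=> [s [c [sP c0 bE]]]; apply: bind; exists [seq (c y, y) | y <- s]; split.
  by move=> x /mapP [y /sP [Py yb] ->] /=; split=> //; split=> //; apply/PS.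
by rewrite bE /lincomb big_map.
Qed.

Lemma posroot_nonneg_comb (X : seq E) (D : set E) (a : E) : (exists z, D z) ->
  reduced X -> posroot X D a -> nonneg_comb (simple_root (posroot X D)) a.
Proof.
move=> [z Dz] redX Da.
pose S := [seq b <- X | `[< posroot X D b >]].
have SP v : posroot X D v <-> v \in S.
  rewrite mem_filter; split; first by move=> Dv; rewrite (asboolT Dv) (proj1 Dv).
  by case/andP => /asboolP.
have [S_X Spos] : {subset S <= X} /\ forall x, x \in S -> 0 < dot z x.
  by split=> x /SP [xX xpos] //; apply: xpos.
apply: nonneg_comb_mono (nonneg_comb_indecomposable (leqnn _) Spos (reduced_sub S_X redX) _).
  by move=> w; apply: indecomposable_simple_root.
exact/SP.
Qed.

End NonnegativeCombinations.

Section Roots.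
Variables (R : realType) (d : nat).
Local Notation E := 'rV[R]_d.
Local Notation dot := (@dot R d).
Local Notation pos_on := (@pos_on R d).
Variable Phi : seq E.
Hypothesis rsPhi : root_system Phi.

Lemma root_neq0 (a : E) : a \in Phi -> a != 0.
Proof. by case: rsPhi => _ Phi0 _ _ aPhi; apply: contraNneq Phi0 => <-. Qed.

Lemma root_system_reduced : reduced Phi.
Proof. by case: rsPhi => _ _ _ redPhi a b aPhi bPhi c bE; apply: redPhi => //; exists c. Qed.

Lemma refl_self (a : E) : a != 0 -> refl a a = - a.
Proof.
move=> a0; rewrite /refl mulfK ?dotxx_eq0 //.
by rewrite -[2]/(1 + 1) scalerDl scale1r opprD addrA subrr add0r.
Qed.

Lemma root_oppr (a : E) : a \in Phi -> - a \in Phi.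
Proof.
by move=> aPhi; case: rsPhi => _ _ reflPhi _; rewrite -refl_self ?root_neq0 ?reflPhi.
Qed.

Lemma root_subsystem_oppr (Psi : seq E) (a : E) : root_subsystem Phi Psi ->
  a \in Psi -> - a \in Psi.
Proof.
by case=> _ sPsi reflPsi aPsi; rewrite -refl_self ?root_neq0 ?sPsi ?reflPsi.
Qed.

Lemma root_hyp_eq (a b : E) : a \in Phi -> b \in Phi -> hyp a = hyp b ->
  b = a \/ b = - a.
Proof.
move=> aPhi bPhi ab.
have orth v : dot v a = 0 -> dot v b = 0 by move=> va; have : hyp b v by rewrite -ab.
exact: root_system_reduced aPhi bPhi _ (orthogonal_sub_colinear (root_neq0 aPhi) orth).
Qed.

Lemma not_separates_dot_ge0 (A B : set E) (a : E) : (exists y, A y) -> (exists y, B y) ->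
  (forall y, A y -> 0 <= dot y a) -> (forall y, B y -> 0 <= dot y a) -> ~ separates a A B.
Proof.
move=> [x Ax] [y By] A0 B0.
case=> -[Aa Ba]; first by move: (Ba _ By); rewrite ltNge B0.
by move: (Aa _ Ax); rewrite ltNge A0.
Qed.

Lemma gallery_pos_on (G : gallery R d) (b : E) (u v : nat) :
  gallery_in Phi G -> b \in Phi -> (u <= v <= glen G)%N ->
  (forall t, (u < t <= v)%N -> grt G t != b /\ grt G t != - b) ->
  pos_on b (gch G u) -> pos_on b (gch G v).
Proof.
move=> [Gch Grt] bPhi /andP [].
elim: v => [|v IH]; first by rewrite leqn0 => /eqP ->.
rewrite leq_eqVlt => /orP [/eqP <- //|uv] vG walls Gu.
have [gPhi ct] := Grt v.+1 vG.
apply: (pos_on_connected_through (Gch _ vG) bPhi ct (root_neq0 gPhi)).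
  have [gb gNb] : grt G v.+1 != b /\ grt G v.+1 != - b by apply: walls; rewrite uv leqnn.
  move=> c; apply/eqP => bc.
  by case: (root_system_reduced gPhi bPhi bc) => bg; [move: gb|move: gNb];
    rewrite bg ?opprK eqxx.
apply: IH => //; first exact: ltnW.
by move=> t /andP [ut tv]; apply: walls; rewrite ut leqW.
Qed.

Lemma gallery_not_separates (G : gallery R d) (a : E) (u v : nat) :
  gallery_in Phi G -> a \in Phi -> (u <= v <= glen G)%N ->
  (forall t, (u < t <= v)%N -> grt G t != a /\ grt G t != - a) ->
  ~ separates a (gch G u) (gch G v).
Proof.
move=> GP aPhi uvG walls.
have Gv : exists y, gch G v y by apply/chamber_inhabited/(proj1 GP); case/andP: uvG.
have wallsN t : (u < t <= v)%N -> grt G t != - a /\ grt G t != - - a.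
  by rewrite opprK => /walls [].
rewrite separatesE => -[[Gua GvNa]|[GuNa Gva]].
  exact: pos_onN_contra Gv (gallery_pos_on GP aPhi uvG walls Gua) GvNa.
apply: pos_onN_contra Gv Gva (gallery_pos_on GP (root_oppr aPhi) uvG wallsN GuNa).
Qed.

Lemma lifts_ch_dot_ge0 (Psi : seq E) (C0 C' : set E) (a : E) :
  {subset Psi <= Phi} -> chamber Phi C0 -> a \in Psi ->
  lifts_ch Phi Psi C' (chamber_of Psi C0) -> pos_on a C0 ->
  forall y, C' y -> 0 <= dot y a.
Proof.
move=> sPsi ch0 aPsi lift C0a y C'y.
have [z C0z] := chamber_inhabited ch0.
have D0a : posroot Psi (chamber_of Psi C0) a.
  by split=> //; apply: pos_on_chamber_of C0a; first by exists z.
have [|l [lsimple ->]] := posroot_nonneg_comb _ (reduced_sub sPsi root_system_reduced) D0a.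
  by exists z; apply: (sub_chamber_of ch0 sPsi).
apply: lincomb_dot_ge0 => x /lsimple [/lift [[_ C'x] _] x0].
by split=> //; apply: C'x.
Qed.

(* The lifted chamber [C'] lies on the same side of [L_a] as the [Psi]-chamber
   of [C0], because [+-a] is a nonnegative combination of [Psi]-simple roots,
   which are simple for [C']. *)
Lemma lifts_ch_not_separates (Psi : seq E) (C0 C1 C' : set E) (a : E) :
  root_subsystem Phi Psi -> a \in Psi ->
  chamber Phi C0 -> chamber Phi C1 -> chamber Phi C' ->
  lifts_ch Phi Psi C' (chamber_of Psi C0) ->
  ~ separates a C0 C1 -> ~ separates a C' C1.
Proof.
move=> PsiP aPsi ch0 ch1 ch' lift; have [_ sPsi _] := PsiP.
wlog C0a : a aPsi / pos_on a C0 => [hw|].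
  case: (chamber_sign ch0 (sPsi _ aPsi)) => [|C0Na]; first exact: hw.
  rewrite -separatesN => nsep; rewrite -separatesN.
  exact: hw (root_subsystem_oppr PsiP aPsi) C0Na nsep.
move=> nsep; have C1a := same_side_pos_on ch1 (sPsi _ aPsi) nsep C0a.
apply: not_separates_dot_ge0 (chamber_inhabited ch') (chamber_inhabited ch1) _ _.
  exact: lifts_ch_dot_ge0 lift C0a.
by move=> y /C1a /ltW.
Qed.

End Roots.

Section RestrictedIndices.
Variables (R : realType) (d : nat).
Local Notation E := 'rV[R]_d.
Variables (Psi : seq E) (G : gallery R d).
Local Notation s := (Iidx Psi G).

Lemma mem_Iidx t : (t \in s) = [&& (1 <= t)%N, (t <= glen G)%N & grt G t \in Psi].
Proof.
rewrite /Iidx mem_filter mem_iota add1n ltnS.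
by case: (grt G t \in Psi); rewrite ?andbF ?andbT.
Qed.

Lemma nth_Iidx_lt j1 j2 : (j1 < j2 < size s)%N -> (nth 0%N s j1 < nth 0%N s j2)%N.
Proof.
case/andP => j12 j2s; apply: (sorted_ltn_nth ltn_trans) => //; last first.
  by rewrite inE (ltn_trans j12).
by apply: sorted_filter; [exact: ltn_trans | exact: iota_ltn_sorted].
Qed.

Lemma nth_Iidx_bounds j : (j < size s)%N ->
  [/\ (1 <= nth 0%N s j)%N, (nth 0%N s j <= glen G)%N & grt G (nth 0%N s j) \in Psi].
Proof. by move=> js; apply/and3P; rewrite -mem_Iidx mem_nth. Qed.

(* [nth 0 (0 :: s) j] is the index preceding [nth 0 s j], or [0] for [j = 0]. *)
Lemma nth_Iidx_prev_lt j : (j < size s)%N -> (nth 0%N (0%N :: s) j < nth 0%N s j)%N.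
Proof.
case: j => [|j] js; first by have [] := nth_Iidx_bounds js.
by apply: nth_Iidx_lt; rewrite leqnn.
Qed.

Lemma nth_Iidx_leq j1 j2 : (j1 <= j2 < size s)%N -> (nth 0%N s j1 <= nth 0%N s j2)%N.
Proof.
case/andP; rewrite leq_eqVlt => /orP [/eqP -> //|j12] j2s.
by apply/ltnW/nth_Iidx_lt; rewrite j12.
Qed.

Lemma Iidx_gap j t : (j < size s)%N -> (nth 0%N (0%N :: s) j < t < nth 0%N s j)%N ->
  grt G t \notin Psi.
Proof.
move=> js /andP [jt tj]; apply/negP => tPsi.
have [_ jG _] := nth_Iidx_bounds js.
have ts : t \in s.
  by rewrite mem_Iidx tPsi (leq_ltn_trans (leq0n _) jt) (leq_trans (ltnW tj) jG).
have ti : nth 0%N s (index t s) = t := nth_index 0%N ts.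
have [ji|ij] := leqP j (index t s).
  by move: tj; rewrite -ti ltnNge nth_Iidx_leq // ji index_mem.
move: jt; case: j ij js {tj jG} => // j ij js /=.
by rewrite -ti ltnNge nth_Iidx_leq // -ltnS ij ltnW.
Qed.

End RestrictedIndices.

Section Concatenation.
Variables (R : realType) (d : nat).
Variable D : nat -> gallery R d.

Definition offset (l : nat) : nat := (\sum_(t < l) glen (D t))%N.

Lemma offsetS l : offset l.+1 = (offset l + glen (D l))%N.
Proof. by rewrite /offset big_ord_recr. Qed.

Lemma leq_offset l l' : (l <= l')%N -> (offset l <= offset l')%N.
Proof.
move/subnK <-; elim: (l' - l)%N => [//|n IH].
by rewrite addSn offsetS (leq_trans IH) // leq_addr.
Qed.

Lemma glen_gunionN m : glen (gunionN D m) = offset m.+1.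
Proof.
elim: m => [|m IH]; first by rewrite /offset big_ord1.
by rewrite /= IH [RHS]offsetS.
Qed.

Lemma offset_block k i : (1 <= i <= offset k)%N ->
  exists l j, [/\ (l < k)%N, (1 <= j <= glen (D l))%N & i = (offset l + j)%N].
Proof.
elim: k => [|k IH] /andP [i1 ik]; first by move: ik; rewrite /offset big_ord0 leqNgt i1.
have [ik'|ki] := leqP i (offset k).
  have /IH [l [j [lk jD ->]]] : (1 <= i <= offset k)%N by rewrite i1.
  by exists l, j; rewrite ltnW.
exists k, (i - offset k)%N; split=> //; last by rewrite subnKC // ltnW.
by rewrite subn_gt0 ki leq_subLR -offsetS.
Qed.

Lemma grt_gunionN m l j : (l <= m)%N -> (1 <= j <= glen (D l))%N ->
  grt (gunionN D m) (offset l + j) = grt (D l) j.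
Proof.
elim: m => [|m IH]; first by rewrite leqn0 => /eqP -> _; rewrite /offset big_ord0.
rewrite leq_eqVlt => /orP [/eqP ->|lm] /andP [j1 jD] /=; rewrite glen_gunionN.
  by rewrite -[X in (_ <= X)%N]addn0 leq_add2l leqNgt j1 addKn.
rewrite ifT ?IH ?j1 //.
by rewrite (leq_trans _ (leq_offset lm)) // offsetS leq_add2l.
Qed.

Lemma gch_gunionN m l j :
  (forall l, (l < m)%N -> gch (D l) (glen (D l)) = gch (D l.+1) 0%N) ->
  (l <= m)%N -> (j <= glen (D l))%N -> gch (gunionN D m) (offset l + j) = gch (D l) j.
Proof.
elim: m l j => [|m IH] l j chain; first by rewrite leqn0 => /eqP -> _; rewrite /offset big_ord0.
have chain' l' : (l' < m)%N -> gch (D l') (glen (D l')) = gch (D l'.+1) 0%N.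
  by move=> l'm; apply/chain/ltnW.
rewrite leq_eqVlt => /orP [/eqP ->|lm] jD /=; rewrite glen_gunionN; last first.
  by rewrite ifT ?IH // (leq_trans _ (leq_offset lm)) // offsetS leq_add2l.
case: ifP => [|_]; last by rewrite addKn.
rewrite -[X in (_ <= X)%N]addn0 leq_add2l leqn0 => /eqP ->.
by rewrite addn0 offsetS IH // chain.
Qed.

End Concatenation.

Section LiftedRestriction.
Variables (R : realType) (d : nat).
Local Notation E := 'rV[R]_d.
Variables (Phi Psi : seq E) (Gamma Delta : gallery R d) (a b : nat).
Hypotheses (rsPhi : root_system Phi) (PsiP : root_subsystem Phi Psi)
  (GammaP : gallery_in Phi Gamma) (ab : (a <= b)%N) (bGamma : (b <= glen Gamma)%N)
  (DeltaP : gallery_in Phi Delta)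
  (liftP : lifts Phi Psi Delta (gal_restrict Psi (subgallery Gamma a b))).
Local Notation s := (Iidx Psi (subgallery Gamma a b)).

Lemma glen_lift : glen Delta = size s.
Proof. by case: liftP. Qed.

Variable j : nat.
Hypothesis jDelta : (1 <= j <= glen Delta)%N.
Local Notation q := (nth 0%N s j.-1).

Let prev_j : nth 0%N (0%N :: s) j = q.
Proof. by case: j jDelta. Qed.

Let js : (j.-1 < size s)%N.
Proof. by case/andP: jDelta; rewrite glen_lift; case: j. Qed.

Lemma lift_index_bounds : (a < a + q <= b)%N.
Proof.
have [q1 qG _] := nth_Iidx_bounds js.
by rewrite -addn1 leq_add2l q1 -leq_subRL.
Qed.

Let qPsi : grt Gamma (a + q) \in Psi.
Proof. by have [] := nth_Iidx_bounds js. Qed.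

Let aqGamma : (a + q <= glen Gamma)%N.
Proof. by case/andP: lift_index_bounds => _ /leq_trans; apply. Qed.

Lemma lift_hyp : hyp (grt Gamma (a + q)) = hyp (grt Delta j).
Proof.
by case: liftP => lenE hypE _; rewrite hypE -?lenE //; case: j jDelta.
Qed.

Let lift_root : grt Delta j = grt Gamma (a + q) \/ grt Delta j = - grt Gamma (a + q).
Proof.
have [_ sPsi _] := PsiP; apply: (root_hyp_eq rsPhi (sPsi _ qPsi)); last exact: lift_hyp.
by have [] := (proj2 DeltaP) j jDelta.
Qed.

(* [a + nth 0 (0 :: s) i] is the index of the chamber of [Gamma] whose
   [Psi]-chamber is lifted by [gch Delta i]. *)
Lemma lift_not_separates i w : (i <= glen Delta)%N ->
  (a + nth 0%N (0%N :: s) i <= w <= glen Gamma)%N ->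
  (forall t, (a + nth 0%N (0%N :: s) i < t <= w)%N -> grt Gamma t \notin Psi) ->
  ~ separates (grt Delta j) (gch Delta i) (gch Gamma w).
Proof.
move=> iDelta uw walls; have [_ sPsi _] := PsiP; case/andP: (uw) => uw' wGamma.
set u := (a + nth 0%N (0%N :: s) i)%N; set al := grt Gamma (a + q).
have ch t : (t <= glen Gamma)%N -> chamber Phi (gch Gamma t) by apply: (proj1 GammaP).
have nsep : ~ separates al (gch Gamma u) (gch Gamma w).
  apply: (gallery_not_separates rsPhi GammaP (sPsi _ qPsi) uw) => t /walls tPsi.
  split; apply: contraNneq tPsi => ->; first exact: qPsi.
  by have := root_subsystem_oppr rsPhi PsiP qPsi.
have lift : lifts_ch Phi Psi (gch Delta i) (chamber_of Psi (gch Gamma u)).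
  by case: liftP => lenE _; apply; rewrite -lenE.
have := lifts_ch_not_separates rsPhi PsiP qPsi (ch _ (leq_trans uw' wGamma)) (ch _ wGamma)
  ((proj1 DeltaP) i iDelta) lift nsep.
by case: lift_root => ->; rewrite ?separatesN.
Qed.

Lemma lift_sign : ~ separates (grt Delta j) (gch Delta j) (gch Gamma (a + q)).
Proof.
apply: lift_not_separates; rewrite ?prev_j.
- by case/andP: jDelta.
- by rewrite leqnn aqGamma.
- by move=> t /andP [/leq_trans qt /qt]; rewrite ltnn.
Qed.

Lemma lift_cosign :
  ~ separates (grt Delta j) (gch Delta j.-1) (gch Gamma (a + q).-1).
Proof.
have prev_q := nth_Iidx_prev_lt js.
have prev_aq : (a + nth 0%N (0%N :: s) j.-1 < a + q)%N by rewrite ltn_add2l.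
have aq0 : (0 < a + q)%N by apply: leq_ltn_trans prev_aq.
apply: lift_not_separates.
- by case/andP: jDelta => _; apply/leq_trans/leq_pred.
- by rewrite -ltnS prednK // prev_aq (leq_trans (leq_pred _) aqGamma).
move=> t /andP [prev_t t_q].
have a_t : (a <= t)%N by apply: leq_trans (leq_addr _ _) (ltnW prev_t).
rewrite -(subnKC a_t); apply: (Iidx_gap js).
by rewrite -(ltn_add2l a) subnKC // prev_t -(ltn_add2l a) subnKC // -(prednK aq0) ltnS.
Qed.

End LiftedRestriction.

Section ConcatenatedLifts.
Variables (R : realType) (d : nat).
Local Notation E := 'rV[R]_d.
Variables (Phi : seq E) (Gamma : gallery R d) (m : nat) (idx : nat -> nat)
  (Psi : nat -> seq E) (Delta : nat -> gallery R d) (p : nat -> nat).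
Local Notation s l := (Iidx (Psi l) (subgallery Gamma (idx l) (idx l.+1))).
Local Notation U := (gunionN Delta m).
Hypotheses (rsPhi : root_system Phi) (GammaP : gallery_in Phi Gamma)
  (idx_last : idx m.+1 = glen Gamma)
  (idx_step : forall l, (l < m.+1)%N -> (idx l <= idx l.+1)%N)
  (PsiP : forall l, (l < m.+1)%N -> root_subsystem Phi (Psi l))
  (DeltaP : forall l, (l < m.+1)%N -> gallery_in Phi (Delta l) /\
     lifts Phi (Psi l) (Delta l) (gal_restrict (Psi l) (subgallery Gamma (idx l) (idx l.+1))))
  (chain : forall l, (l < m)%N -> gch (Delta l) (glen (Delta l)) = gch (Delta l.+1) 0%N)
  (p_def : forall l j, (l < m.+1)%N -> (offset Delta l < j <= offset Delta l.+1)%N ->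
     p j = (nth 0%N (s l) (j - offset Delta l).-1 + idx l)%N).

Lemma idx_le l l' : (l <= l' <= m.+1)%N -> (idx l <= idx l')%N.
Proof.
case/andP => /subnK <-; elim: (l' - l)%N => [//|n IH] lm.
by rewrite addSn (leq_trans (IH (ltnW lm))) ?idx_step.
Qed.

Lemma block_hyps l : (l < m.+1)%N -> [/\ root_subsystem Phi (Psi l),
  (idx l <= idx l.+1)%N, (idx l.+1 <= glen Gamma)%N, gallery_in Phi (Delta l)
  & lifts Phi (Psi l) (Delta l) (gal_restrict (Psi l) (subgallery Gamma (idx l) (idx l.+1)))].
Proof.
move=> lm; have [DeltaPl liftPl] := DeltaP lm.
by split=> //; [exact: PsiP | exact: idx_step | rewrite -idx_last idx_le // lm leqnn].
Qed.

Lemma union_block i : (1 <= i <= glen U)%N -> exists l j,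
  [/\ (l < m.+1)%N, (1 <= j <= glen (Delta l))%N & i = (offset Delta l + j)%N].
Proof. by rewrite glen_gunionN; apply: offset_block. Qed.

Lemma p_block l j : (l < m.+1)%N -> (1 <= j <= glen (Delta l))%N ->
  p (offset Delta l + j) = (idx l + nth 0%N (s l) j.-1)%N.
Proof.
move=> lm /andP [j1 jD]; rewrite (p_def lm); first by rewrite addKn addnC.
by rewrite offsetS -[X in (X < _)%N]addn0 ltn_add2l j1 leq_add2l.
Qed.

Lemma p_block_bounds l j : (l < m.+1)%N -> (1 <= j <= glen (Delta l))%N ->
  (idx l < p (offset Delta l + j) <= idx l.+1)%N.
Proof.
move=> lm jD; have [PsiPl ab bGamma DeltaPl liftPl] := block_hyps lm.
by rewrite p_block //; exact: (lift_index_bounds ab liftPl jD).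
Qed.

Lemma union_p_bounds i : (1 <= i <= glen U)%N -> (1 <= p i <= glen Gamma)%N.
Proof.
case/union_block => l [j [lm jD ->]]; have [_ _ bGamma _ _] := block_hyps lm.
by case/andP: (p_block_bounds lm jD) => lo hi; rewrite (leq_ltn_trans _ lo) // (leq_trans hi bGamma).
Qed.

Lemma union_p_increasing i i' : (1 <= i)%N -> (i < i')%N -> (i' <= glen U)%N ->
  (p i < p i')%N.
Proof.
move=> i1 ii' i'U; have iU := ltnW (leq_trans ii' i'U).
have [l [j [lm jD iE]]] := union_block (introT andP (conj i1 iU)).
have [l' [j' [lm' jD' i'E]]] := union_block (introT andP (conj (leq_trans i1 (ltnW ii')) i'U)).
move: ii'; rewrite iE i'E; case: (ltngtP l l') => [ll'|l'l|ll'] ii'; last subst l'.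
- case/andP: (p_block_bounds lm jD) => _ hi; case/andP: (p_block_bounds lm' jD') => lo' _.
  by rewrite (leq_ltn_trans hi) // (leq_ltn_trans _ lo') // idx_le // ll' ltnW.
- move: ii'; rewrite ltnNge (leq_trans _ (leq_addr _ _)) //.
  by rewrite (leq_trans _ (leq_offset _ l'l)) // offsetS leq_add2l; case/andP: jD'.
- rewrite !p_block // ltn_add2l; have [_ _ _ _ [lenE _ _]] := block_hyps lm.
  move: ii' jD jD'; rewrite ltn_add2l lenE {iE i'E}; case: j => // j; case: j' => // j' jj' _.
  by case/andP => _ j's; apply: nth_Iidx_lt; rewrite -ltnS jj'.
Qed.

Lemma union_hyp i : (1 <= i <= glen U)%N -> hyp (grt Gamma (p i)) = hyp (grt U i).
Proof.
case/union_block => l [j [lm jD ->]]; have [PsiPl ab bGamma DeltaPl liftPl] := block_hyps lm.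
by rewrite p_block // grt_gunionN //; exact: (lift_hyp liftPl jD).
Qed.

Lemma union_sign i : (1 <= i <= glen U)%N ->
  ~ separates (grt U i) (gch U i) (gch Gamma (p i)).
Proof.
case/union_block => l [j [lm jD ->]]; have [PsiPl ab bGamma DeltaPl liftPl] := block_hyps lm.
rewrite p_block // grt_gunionN // gch_gunionN //; last by case/andP: jD.
exact: (lift_sign rsPhi PsiPl GammaP ab bGamma DeltaPl liftPl jD).
Qed.

Lemma union_cosign i : (1 <= i <= glen U)%N ->
  ~ separates (grt U i) (gch U i.-1) (gch Gamma (p i).-1).
Proof.
case/union_block => l [j [lm jD ->]]; have [PsiPl ab bGamma DeltaPl liftPl] := block_hyps lm.
have -> : (offset Delta l + j).-1 = (offset Delta l + j.-1)%N by case: j jD => //= j _; rewrite addnS.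
rewrite p_block // grt_gunionN // gch_gunionN //; last by case/andP: jD => _; apply/leq_trans/leq_pred.
exact: (lift_cosign rsPhi PsiPl GammaP ab bGamma DeltaPl liftPl jD).
Qed.

Lemma gunionN_lift_positive_pair :
  [/\ ppair U Gamma p, positive_sign U Gamma p & positive_cosign U Gamma p].
Proof.
split; first split.
- exact: union_p_bounds.
- exact: union_p_increasing.
- exact: union_hyp.
- exact: union_sign.
- exact: union_cosign.
Qed.

End ConcatenatedLifts.

Theorem mainTheorem9 (R : realType) (d : nat) (Phi : seq 'rV[R]_d)
  (Gamma : gallery R d) (k : nat) (idx : nat -> nat)
  (Psi : nat -> seq 'rV[R]_d) (Delta : nat -> gallery R d) (p : nat -> nat) :
  root_system Phi ->
  gallery_in Phi Gamma ->
  (0 < k)%N ->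
  idx 0%N = 0%N -> idx k = glen Gamma ->
  (forall l, (l < k)%N -> (idx l <= idx l.+1)%N) ->
  (forall l, (l < k)%N -> root_subsystem Phi (Psi l) /\ saturated Phi (Psi l)) ->
  (forall l, (l < k)%N ->
     gallery_in Phi (Delta l) /\
     lifts Phi (Psi l) (Delta l)
       (gal_restrict (Psi l) (subgallery Gamma (idx l) (idx l.+1)))) ->
  (forall l, (l.+1 < k)%N -> gch (Delta l) (glen (Delta l)) = gch (Delta l.+1) 0%N) ->
  (forall l j, (l < k)%N ->
     (\sum_(t < l) glen (Delta t) < j <= \sum_(t < l.+1) glen (Delta t))%N ->
     p j = (nth 0%N (Iidx (Psi l) (subgallery Gamma (idx l) (idx l.+1)))
                 (j - \sum_(t < l) glen (Delta t)).-1 + idx l)%N) ->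
  let U := gunionN Delta k.-1 in
  [/\ ppair U Gamma p, positive_sign U Gamma p & positive_cosign U Gamma p].
Proof.
case: k => [//|m] rsPhi GammaP _ _ idx_last idx_step PsiP DeltaP chain p_def U.
have PsiP' l (lm : (l < m.+1)%N) : root_subsystem Phi (Psi l) := proj1 (PsiP l lm).
exact: (gunionN_lift_positive_pair rsPhi GammaP idx_last idx_step PsiP' DeltaP chain p_def).
Qed.
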